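(* Let $X$ be a commutative topological algebra over $\mathbb{K}$, let $M\subset X$, and let $\alpha\ge\aleph_0$ be a cardinal with $\alpha\ge w(X)$. Then $M$ is $\alpha$-infinitely strongly $\alpha$-dense-algebrable if and only if $M$ is strongly $\alpha$-dense-algebrable.
   Context: Algebras are associative linear algebras over $\mathbb{K}$; a topological algebra has continuous sum, product and scalar multiplication. $w(X)$ is the smallest cardinality of a base of the topology. $\langle S\rangle$ is the subalgebra generated by $S$. With $\mathbb{P}_n$ the polynomials in $n$ variables without constant term, $S$ is a set of free generators (SFG) if $P(x_1,\dots,x_n)\neq 0$ for every $n$, every non-zero $P\in\mathbb{P}_n$ and all pairwise distinct $x_1,\dots,x_n\in S$. An $\alpha$-generated free subalgebra is a subalgebra $\langle F\rangle$ with $F$ an SFG of cardinality $\alpha$. $M$ is strongly $\alpha$-dense-algebrable if $M\cup\{0\}$ contains a dense $\alpha$-generated free subalgebra of $X$. For $\alpha\ge\aleph_0$, $M$ is $\alpha$-infinitely strongly $\alpha$-dense-algebrable if there is a family $\{Y_\kappa\}_{\kappa<\alpha}$ of dense $\alpha$-generated free subalgebras of $X$ with $Y_\kappa\subset M\cup\{0\}$ for all $\kappa$ and $Y_{\kappa_1}\cap Y_{\kappa_2}=\{0\}$ for $\kappa_1\ne\kappa_2$. *)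

From HB Require Import structures.
From mathcomp Require Import all_boot all_order all_algebra.
From mathcomp Require Import mpoly.
From mathcomp Require Import all_classical all_reals all_analysis.
From mathcomp Require complex.
Import complex.ComplexField.

Set Implicit Arguments.
Unset Strict Implicit.
Unset Printing Implicit Defensive.

Import Order.TTheory GRing.Theory Num.Theory.
Import numFieldNormedType.Exports.
Local Open Scope classical_set_scope.
Local Open Scope ring_scope.
Local Open Scope card_scope.

Definition Kfield (R : realType) (b : bool) : numFieldType :=
  if b then (R : numFieldType) else (complex.complex R : numFieldType).


Section Defs.
Variables (K : numFieldType) (X : topologicalLmodType K) (mul : X -> X -> X).

(* Continuity of +, of
   scalar multiplication K * X -> X (and of opposite) is part of
   [topologicalLmodType]. *)
Definition comm_top_algebra : Prop :=
  [/\ (forall x y z, mul x (mul y z) = mul (mul x y) z),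
      (forall x y, mul x y = mul y x),
      (forall a x y z, mul (a *: x + y) z = a *: mul x z + mul y z) &
      continuous (fun p : X * X => mul p.1 p.2)].

Definition subalg_closed (A : set X) : Prop :=
  [/\ A 0,
      (forall x y, A x -> A y -> A (x + y)),
      (forall (a : K) x, A x -> A (a *: x)) &
      (forall x y, A x -> A y -> A (mul x y))].

Definition gen_subalg (S : set X) : set X :=
  [set x | forall A, S `<=` A -> subalg_closed A -> A x].

Definition prod_list (s : seq X) : X :=
  if s is a :: s' then foldl mul a s' else 0.

Definition mono_eval n (m : 'X_{1..n}) (x : 'I_n -> X) : X :=
  prod_list (flatten [seq nseq (m i) (x i) | i <- enum 'I_n]).

(* P(x_1,...,x_n) for P without constant term *)
Definition peval n (P : {mpoly K[n]}) (x : 'I_n -> X) : X :=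
  \sum_(m <- msupp P) P@_m *: mono_eval m x.

Definition no_const_term n (P : {mpoly K[n]}) : Prop :=
  P@_0%MM = 0.

Definition SFG (S : set X) : Prop :=
  forall n (P : {mpoly K[n]}) (x : 'I_n -> X),
    no_const_term P -> P != 0 -> injective x -> (forall i, S (x i)) ->
    peval P x != 0.

Definition free_subalg_gen (A : Type) (Y : set X) : Prop :=
  exists F : set X, [/\ SFG F, F #= [set: A] & Y = gen_subalg F].

(* w(X) <= alpha = |A| : X has a base of cardinality at most |A| *)
Definition weight_le (A : Type) : Prop :=
  exists2 B : set (set X), basis B & B #<= [set: A].

Definition strongly_dense_algebrable (A : Type) (M : set X) : Prop :=
  exists Y : set X,
    [/\ free_subalg_gen A Y, dense Y & Y `<=` M `|` [set 0]].

Definition inf_strongly_dense_algebrable (A : Type) (M : set X) : Prop :=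
  exists Y : A -> set X,
    [/\ (forall k, free_subalg_gen A (Y k)),
        (forall k, dense (Y k)),
        (forall k, Y k `<=` M `|` [set 0]) &
        (forall k1 k2, k1 <> k2 -> Y k1 `&` Y k2 = [set 0])].

End Defs.

From HB Require Import structures.
From mathcomp Require Import all_boot all_order all_algebra ssrAC.
From mathcomp Require Import mpoly.
From mathcomp Require Import all_classical all_reals all_analysis.

Set Implicit Arguments.
Unset Strict Implicit.
Unset Printing Implicit Defensive.

Import Order.TTheory GRing.Theory Num.Theory.
Import numFieldNormedType.Exports.
Local Open Scope classical_set_scope.
Local Open Scope ring_scope.
Local Open Scope card_scope.

(* Only the passage from one dense free subalgebra <F> to alpha disjoint ones
   needs work.  As alpha x alpha injects into alpha, F contains distinct
   generators f(k,b) indexed by alpha x alpha, and as w(X) <= alpha there are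
   nonempty open sets O_b (b < alpha) such that every nonempty open set
   contains one of them.  Pick y_b = Q_b(z) in <F> inside O_b (z in F) and set
   g(k,b) = y_b + e f(k,b)^N with N > deg Q_b and e <> 0 so small that
   g(k,b) stays in O_b.  Substituting Q_i + e_i X_(j_i)^(N_i) for X_i in a
   nonzero polynomial without constant term keeps, from a monomial of maximal
   weighted degree, a monomial that cannot cancel: the g(k,b) are free.  So
   the Y_k = <g(k,b) : b < alpha> are dense free subalgebras inside M + {0},
   and two of them meet in 0 only, since a polynomial identity between
   disjoint sets of free generators is trivial. *)

Lemma seq_argmax (T : eqType) (s : seq T) (f : T -> nat) : s != [::] ->
  exists2 x, x \in s & forall y, y \in s -> (f y <= f x)%N.
Proof.
elim: s => // a s IH _; have [->|/IH [x xs hx]] := eqVneq s [::].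
  by exists a; rewrite ?inE // => y; rewrite inE => /eqP ->.
have [le|lt] := leqP (f a) (f x).
  exists x; first by rewrite inE xs orbT.
  by move=> y; rewrite inE => /orP [/eqP ->|/hx].
exists a; first by rewrite inE eqxx.
by move=> y; rewrite inE => /orP [/eqP ->//|/hx /leq_trans]; apply; apply: ltnW.
Qed.

Section MultinomialDegree.
Variables (K : fieldType) (k : nat).
Implicit Types (a b : {mpoly K[k]}) (M : 'X_{1..k}).

Lemma msizeD_leq a b d : (msize a <= d)%N -> (msize b <= d)%N -> (msize (a + b) <= d)%N.
Proof. by move=> ha hb; apply: leq_trans (msizeD_le _ _) _; rewrite geq_max ha hb. Qed.

Lemma msizeM_leq a b d e :
  (msize a <= d)%N -> (msize b <= e.+1)%N -> (msize (a * b) <= d + e)%N.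
Proof.
have [->|a0] := eqVneq a 0; first by rewrite mul0r msize0.
have [->|b0] := eqVneq b 0; first by rewrite mulr0 msize0.
move=> ha hb; rewrite msizeM //.
by move: (leq_add ha hb); rewrite addnS; case: (_ + _)%N.
Qed.

Lemma msizeZX c M : (msize (c *: 'X_[M] : {mpoly K[k]}) <= (mdeg M).+1)%N.
Proof. by apply: leq_trans (msizeZ_le _ _) _; rewrite msizeX. Qed.

(* [a] is [c X^M] plus monomials of degree [< mdeg M] ([msize] is the degree
   plus one). *)
Definition top_term a (c : K) M := (msize (a - c *: 'X_[M]) <= mdeg M)%N.

Lemma top_term_msize a c M : top_term a c M -> (msize a <= (mdeg M).+1)%N.
Proof.
by move=> ha; rewrite -(subrK (c *: 'X_[M]) a); apply: msizeD_leq (leqW ha) (msizeZX _ _).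
Qed.

Lemma top_termM a b c c' M M' :
  top_term a c M -> top_term b c' M' -> top_term (a * b) (c * c') (M + M')%MM.
Proof.
move=> ha hb; rewrite /top_term mdegD.
have -> : a * b - (c * c') *: 'X_[M + M'] =
    (a - c *: 'X_[M]) * b + (b - c' *: 'X_[M']) * (c *: 'X_[M]).
  rewrite !mulrBl (mulrC b) addrA subrK -scalerAl -scalerAr scalerA.
  by rewrite mpolyXD (mulrC c) (mulrC 'X_[M]).
apply: msizeD_leq; first exact: msizeM_leq ha (top_term_msize hb).
by rewrite addnC; apply: msizeM_leq hb (msizeZX _ _).
Qed.

Lemma top_term1 : top_term 1 1 0%MM.
Proof. by rewrite /top_term mpolyX0 scale1r subrr msize0. Qed.

Lemma top_termX a c M e : top_term a c M -> top_term (a ^+ e) (c ^+ e) (M *+ e)%MM.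
Proof.
move=> h; elim: e => [|e IH]; first by rewrite !expr0 mulm0n; exact: top_term1.
by rewrite !exprS mulmS; exact: top_termM.
Qed.

Lemma subC_neq0 a M : M != 0%MM -> a@_M != 0 -> a - (a@_0%MM)%:MP != 0.
Proof.
move=> M0 aM; apply: contraNneq aM => /(congr1 (mcoeff M)).
by rewrite mcoeffB mcoeffC (negbTE M0) mulr0 subr0 mcoeff0 => ->.
Qed.

Lemma msize_subC a : (msize (a - (a@_0%MM)%:MP) <= (msize a).+1)%N.
Proof.
apply: msizeD_leq; first exact: leqW.
by rewrite msizeN msizeC; case: (_ != 0).
Qed.

Lemma msize_rename n (a : {mpoly K[n]}) (s : 'I_n -> 'I_k) :
  (msize (a \mPo [tuple 'X_(s i) | i < n]) <= msize a)%N.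
Proof.
rewrite comp_mpolyE big_seq.
apply: (big_ind (fun b => msize b <= msize a)%N); first by rewrite msize0.
  by move=> b b'; apply: msizeD_leq.
move=> m ma; apply: leq_trans (msizeZ_le _ _) _.
have -> : \prod_(i < n) tnth [tuple 'X_(s i0) | i0 < n] i ^+ m i =
    'X_[\sum_(i < n) (U_(s i) *+ m i)%MM] :> {mpoly K[k]}.
  rewrite (big_morph (fun m => 'X_[m] : {mpoly K[k]}) (@mpolyXD _ _) (@mpolyX0 _ _)).
  by apply: eq_bigr => i _; rewrite tnth_mktuple mpolyXn.
rewrite msizeX; apply: leq_trans _ (msize_mdeg_lt ma); rewrite ltnS mdeg_sum mdegE.
by apply: leq_sum => i _; rewrite mdegMn mdeg1 mul1n.
Qed.

End MultinomialDegree.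

Section WeightedSubstitution.
Variables (K : fieldType) (k n : nat).
Variables (Q : 'I_n -> {mpoly K[k]}) (c : 'I_n -> K) (j : 'I_n -> 'I_k) (N : 'I_n -> nat).
Hypotheses (j_inj : injective j) (c_neq0 : forall i, c i != 0)
  (N_gt0 : forall i, (0 < N i)%N) (msizeQ : forall i, (msize (Q i) <= N i)%N).
Implicit Types (m : 'X_{1..n}).

(* Substituting [Q i + c i X_(j i)^(N i)] for [X_i] maps [X^m] to a polynomial
   with top term [X^(wmono m)], whose degree is the weighted degree [wdeg m];
   a monomial of [P] of maximal weighted degree then survives. *)
Definition subst_poly i := Q i + c i *: 'X_[U_(j i) *+ N i].
Definition wmono (m : 'X_{1..n}) : 'X_{1..k} := (\sum_(i < n) (U_(j i) *+ N i) *+ m i)%MM.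
Definition wdeg (m : 'X_{1..n}) : nat := (\sum_(i < n) N i * m i)%N.

Lemma top_term_subst_poly i : top_term (subst_poly i) (c i) (U_(j i) *+ N i)%MM.
Proof. by rewrite /top_term /subst_poly addrK mdegMn mdeg1 mul1n. Qed.

Lemma top_term_subst_prod m :
  top_term (\prod_(i < n) subst_poly i ^+ m i) (\prod_(i < n) c i ^+ m i) (wmono m).
Proof.
rewrite /wmono; elim: (index_enum _) => [|i r IH].
  by rewrite !big_nil; exact: top_term1.
by rewrite !big_cons; apply: top_termM IH; apply/top_termX/top_term_subst_poly.
Qed.

Lemma wmono_at m i0 : wmono m (j i0) = (N i0 * m i0)%N.
Proof.
rewrite /wmono mnm_sumE (bigD1 i0) //= big1 ?addn0.
  by rewrite !mulmnE mnm1E eqxx mul1n.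
by move=> i ne; rewrite !mulmnE mnm1E (inj_eq j_inj) (negbTE ne).
Qed.

Lemma wmono_inj : injective wmono.
Proof.
move=> m m' e; apply/mnmP => i.
by have /eqP := wmono_at m i; rewrite e wmono_at eqn_pmul2l // => /eqP.
Qed.

Lemma mdeg_wmono m : mdeg (wmono m) = wdeg m.
Proof.
rewrite /wmono /wdeg mdeg_sum; apply: eq_bigr => i _.
by rewrite mdegMn mdegMn mdeg1 mul1n mulnC.
Qed.

Lemma mcoeff_subst_prod m m' : (wdeg m <= wdeg m')%N ->
  (\prod_(i < n) subst_poly i ^+ m i)@_(wmono m') =
  (\prod_(i < n) c i ^+ m i) * (wmono m == wmono m')%:R.
Proof.
move=> le; have := top_term_subst_prod m; rewrite /top_term mdeg_wmono => h.
have /msize_mdeg_ge : (msize (\prod_(i < n) subst_poly i ^+ m i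
    - (\prod_(i < n) c i ^+ m i) *: 'X_[wmono m]) <= mdeg (wmono m'))%N.
  by rewrite mdeg_wmono; apply: leq_trans h le.
by rewrite -mcoeff_eq0 mcoeffB mcoeffZ mcoeffX subr_eq0 => /eqP ->.
Qed.

Lemma comp_subst_neq0 (P : {mpoly K[n]}) : P@_0%MM = 0 -> P != 0 ->
  exists2 M, M != 0%MM & (P \mPo [tuple subst_poly i | i < n])@_M != 0.
Proof.
move=> P0 Pn0.
have suppP : msupp P != [::] by rewrite msupp_eq0.
have [ms msP msmax] := seq_argmax wdeg suppP.
have ms0 : ms != 0%MM by apply: contraTneq msP => ->; rewrite -mcoeff_eq0 P0.
exists (wmono ms).
  apply: contraNneq ms0 => /(congr1 mdeg); rewrite mdeg_wmono mdeg0 => /eqP.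
  rewrite sum_nat_eq0 => /forallP wd0; apply/eqP/mnmP => i; rewrite mnm0E.
  by have := wd0 i; rewrite muln_eq0 gtn_eqF ?N_gt0 //= => /eqP.
have tE m : \prod_(i < n) tnth [tuple subst_poly i | i < n] i ^+ m i =
    \prod_(i < n) subst_poly i ^+ m i.
  by apply: eq_bigr => i _; rewrite tnth_mktuple.
rewrite comp_mpolyE raddf_sum /= (bigD1_seq ms) ?msupp_uniq //=.
rewrite [X in _ + X]big_seq_cond [X in _ + X]big1 ?addr0 => [|m /andP[mP ne]];
  rewrite mcoeffZ tE mcoeff_subst_prod ?msmax //.
  rewrite eqxx mulr1 mulf_neq0 //; first by rewrite mcoeff_msupp in msP.
  by rewrite prodf_seq_neq0; apply/allP => i _; rewrite expf_neq0.
by rewrite (inj_eq wmono_inj) (negbTE ne) !mulr0.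
Qed.

End WeightedSubstitution.

Section PolynomialEvaluation.
Variables (K : numFieldType) (X : topologicalLmodType K) (mul : X -> X -> X).
Hypothesis HA : comm_top_algebra mul.

Lemma amulA x y z : mul x (mul y z) = mul (mul x y) z.
Proof. by case: HA. Qed.

Lemma amulC x y : mul x y = mul y x.
Proof. by case: HA. Qed.

Lemma amulDZl a x y z : mul (a *: x + y) z = a *: mul x z + mul y z.
Proof. by case: HA. Qed.

Lemma amulDl x y z : mul (x + y) z = mul x z + mul y z.
Proof. by have := amulDZl 1 x y z; rewrite !scale1r. Qed.

Lemma amul0l z : mul 0 z = 0.
Proof. by apply: (@addrI _ (mul 0 z)); rewrite -amulDl !addr0. Qed.

Lemma amulZl a x z : mul (a *: x) z = a *: mul x z.
Proof. by rewrite -[a *: x]addr0 amulDZl amul0l addr0. Qed.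

Lemma amulDr x y z : mul z (x + y) = mul z x + mul z y.
Proof. by rewrite amulC amulDl !(amulC z). Qed.

Lemma amulZr a x z : mul z (a *: x) = a *: mul z x.
Proof. by rewrite amulC amulZl amulC. Qed.

(* The unitization K x X, with (a, x) (b, y) = (a b, a y + b x + x y), turns
   the non-unital X into a commutative ring, so that evaluating a polynomial
   is the ring morphism [mmap] of the multinomials library. *)
Definition unitization := (K * X)%type.
HB.instance Definition _ := GRing.Zmodule.on unitization.

Definition umul (u v : unitization) : unitization :=
  (u.1 * v.1, u.1 *: v.2 + v.1 *: u.2 + mul u.2 v.2).
Definition uone : unitization := (1, 0).

Lemma umulA : associative umul.
Proof.
move=> [a x] [b y] [c z]; rewrite /umul /=; congr pair; first by rewrite mulrA.
rewrite !scalerDr !scalerA !amulDl !amulDr !amulZl !amulZr amulA.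
rewrite (mulrC c a) (mulrC c b).
by rewrite (AC (4*3) (1*2*3*4*5*6*7)) (AC ((1*3)*3) (1*2*5*3*6*4*7)).
Qed.

Lemma umulC : commutative umul.
Proof.
move=> [a x] [b y]; rewrite /umul /=; congr pair; first by rewrite mulrC.
by rewrite (amulC x y) (addrC (a *: y)).
Qed.

Lemma umul1 : left_id uone umul.
Proof. by move=> [a x]; rewrite /umul /= mul1r scaler0 scale1r amul0l !addr0. Qed.

Lemma umulDl : left_distributive umul +%R.
Proof.
move=> [a x] [b y] [c z]; rewrite /umul /=; congr pair; first by rewrite mulrDl.
rewrite scalerDl scalerDr amulDl.
by rewrite /= (AC ((2*2)*2) (1*3*5*2*4*6)) (AC (3*3) (1*2*3*4*5*6)).
Qed.

Lemma uone_neq0 : uone != 0.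
Proof. by apply/negP => /eqP [] /eqP; rewrite oner_eq0. Qed.

HB.instance Definition _ :=
  GRing.Zmodule_isComNzRing.Build unitization umulA umulC umul1 umulDl uone_neq0.

Definition uscalar (c : K) : unitization := (c, 0).
Definition uvec (x : X) : unitization := (0, x).

Lemma uscalar_is_zmod_morphism : zmod_morphism uscalar.
Proof. by move=> a b; rewrite /uscalar; congr pair; rewrite subrr. Qed.
HB.instance Definition _ :=
  GRing.isZmodMorphism.Build K unitization uscalar uscalar_is_zmod_morphism.

Lemma uscalar_is_monoid_morphism : monoid_morphism uscalar.
Proof.
split=> // a b; rewrite /uscalar /GRing.mul /= /umul /=; congr pair.
by rewrite !scaler0 amul0l !addr0.
Qed.
HB.instance Definition _ :=
  GRing.isMonoidMorphism.Build K unitization uscalar uscalar_is_monoid_morphism.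

Lemma umulE (u v : unitization) :
  u * v = (u.1 * v.1, u.1 *: v.2 + v.1 *: u.2 + mul u.2 v.2).
Proof. by []. Qed.

Lemma uvecM x y : uvec x * uvec y = uvec (mul x y).
Proof. by rewrite umulE /uvec /= mul0r !scale0r !add0r. Qed.

Lemma uscalarM_snd c u : (uscalar c * u).2 = c *: u.2.
Proof. by rewrite umulE /= scaler0 amul0l !addr0. Qed.

Lemma foldl_mulA a b s : foldl mul (mul a b) s = mul a (foldl mul b s).
Proof. by elim: s a b => //= c s IH a b; rewrite IH IH amulA. Qed.

Lemma prod_uvec s :
  \prod_(a <- s) uvec a = if s is [::] then 1 else uvec (prod_list mul s).
Proof.
elim: s => [|a s IH]; first by rewrite big_nil.
rewrite big_cons IH; case: s IH => [|b s] _ /=; first by rewrite mulr1.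
by rewrite uvecM foldl_mulA.
Qed.

Lemma mmap1_uvec n (x : 'I_n -> X) (m : 'X_{1..n}) :
  mmap1 (uvec \o x) m =
  \prod_(a <- flatten [seq nseq (m i) (x i) | i <- enum 'I_n]) uvec a.
Proof.
rewrite big_flatten /= big_map big_enum /mmap1 /=.
by apply: eq_bigr => i _; rewrite big_nseq iter_mulr_1.
Qed.

Lemma mmap1_uvecE n (x : 'I_n -> X) (m : 'X_{1..n}) :
  mmap1 (uvec \o x) m = ((m == 0%MM)%:R, mono_eval mul m x).
Proof.
rewrite mmap1_uvec prod_uvec /mono_eval.
have [->|m0] := eqVneq m 0%MM.
  suff -> : flatten [seq nseq ((0%MM : 'X_{1..n}) i) (x i) | i <- enum 'I_n] = [::].
    by [].
  by elim: (enum 'I_n) => //= i s' IH; rewrite mnm0E.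
case E: (flatten _) => [|a s] //; case/eqP: m0; apply/mnmP => i; rewrite mnm0E.
have : size (flatten [seq nseq (m i) (x i) | i <- enum 'I_n]) = 0%N by rewrite E.
rewrite size_flatten /shape -map_comp sumnE big_map big_enum /=.
by move/eqP; rewrite sum_nat_eq0 => /forallP /(_ i); rewrite /= size_nseq => /eqP.
Qed.

Definition upeval n (x : 'I_n -> X) (P : {mpoly K[n]}) : unitization :=
  mmap uscalar (uvec \o x) P.

Lemma upevalE n (P : {mpoly K[n]}) x : upeval x P = (P@_0%MM, peval mul P x).
Proof.
rewrite /upeval /mmap [LHS]surjective_pairing; congr (_, _).
- rewrite (big_morph fst (fun _ _ => erefl) erefl).
  transitivity ((\sum_(m <- msupp P) P@_m *: 'X_[m])@_0%MM); last by rewrite -mpolyE.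
  rewrite raddf_sum /=; apply: eq_bigr => m _.
  by rewrite mmap1_uvecE mcoeffZ mcoeffX eq_sym.
- rewrite (big_morph snd (fun _ _ => erefl) erefl); apply: eq_bigr => m _.
  by rewrite uscalarM_snd mmap1_uvecE.
Qed.

Lemma pevalE n (P : {mpoly K[n]}) x : peval mul P x = (upeval x P).2.
Proof. by rewrite upevalE. Qed.

Lemma upeval_comp n k (P : {mpoly K[n]}) (lq : n.-tuple {mpoly K[k]}) w :
  upeval w (P \mPo lq) = mmap uscalar (fun i => upeval w (tnth lq i)) P.
Proof.
rewrite /upeval comp_mpolyEX [in RHS](mpolyE P) !raddf_sum /=.
apply/eq_bigr => m _; rewrite !mmapZ; congr (_ * _).
rewrite comp_mpolyX rmorph_prod mmapX /mmap1.
by apply/eq_bigr=> i _; rewrite rmorphXn.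
Qed.

Lemma peval_comp n k (P : {mpoly K[n]}) (lq : n.-tuple {mpoly K[k]}) w :
  (forall i, (tnth lq i)@_0%MM = 0) ->
  peval mul (P \mPo lq) w = peval mul P (fun i => peval mul (tnth lq i) w).
Proof.
move=> lq0; rewrite !pevalE upeval_comp.
suff -> : (fun i => upeval w (tnth lq i)) = uvec \o (fun i => peval mul (tnth lq i) w).
  by [].
by apply: funext => i; rewrite upevalE lq0.
Qed.

Lemma pevalXU n (x : 'I_n -> X) i : peval mul 'X_i x = x i.
Proof. by rewrite pevalE /upeval mmapX mmap1U. Qed.

Lemma peval_rename n k (P : {mpoly K[n]}) (s : 'I_n -> 'I_k) (w : 'I_k -> X) :
  peval mul (P \mPo [tuple 'X_(s i) | i < n]) w = peval mul P (w \o s).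
Proof.
rewrite peval_comp => [|i]; last by rewrite tnth_mktuple mcoeffX mnm1_eq0.
by congr peval; apply: funext => i; rewrite tnth_mktuple pevalXU.
Qed.

Lemma pevalD n (P Q : {mpoly K[n]}) x :
  peval mul (P + Q) x = peval mul P x + peval mul Q x.
Proof. by rewrite !pevalE /upeval raddfD. Qed.

Lemma pevalB n (P Q : {mpoly K[n]}) x :
  peval mul (P - Q) x = peval mul P x - peval mul Q x.
Proof. by rewrite !pevalE /upeval raddfB. Qed.

Lemma pevalZ n (P : {mpoly K[n]}) c x : peval mul (c *: P) x = c *: peval mul P x.
Proof. by rewrite !pevalE /upeval mmapZ uscalarM_snd. Qed.

Lemma pevalC n c (x : 'I_n -> X) : peval mul c%:MP x = 0.
Proof. by rewrite pevalE /upeval mmapC. Qed.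

Lemma peval0 n (x : 'I_n -> X) : peval mul 0 x = 0.
Proof. by rewrite -mpolyC0 pevalC. Qed.

Lemma pevalM n (P Q : {mpoly K[n]}) x : P@_0%MM = 0 -> Q@_0%MM = 0 ->
  peval mul (P * Q) x = mul (peval mul P x) (peval mul Q x).
Proof.
move=> P0 Q0; rewrite !pevalE /upeval rmorphM /= -!/(upeval x _) !upevalE P0 Q0 /=.
by rewrite !scale0r !add0r.
Qed.

Lemma mcoeff0_subC n (P : {mpoly K[n]}) : (P - (P@_0%MM)%:MP)@_0%MM = 0.
Proof. by rewrite mcoeffB mcoeffC eqxx mulr1 subrr. Qed.

Lemma peval_subC n (P : {mpoly K[n]}) x :
  peval mul (P - (P@_0%MM)%:MP) x = peval mul P x.
Proof. by rewrite pevalB pevalC subr0. Qed.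

Lemma mpoly_nvar0E (P : {mpoly K[0]}) : P = (P@_0%MM)%:MP.
Proof.
apply/mpolyP => m; rewrite mcoeffC.
have -> : m = 0%MM by apply/mnmP => -[].
by rewrite eqxx mulr1.
Qed.

Lemma peval_nvar0 (P : {mpoly K[0]}) w : peval mul P w = 0.
Proof. by rewrite (mpoly_nvar0E P) pevalC. Qed.

Lemma peval_at0 n (P : {mpoly K[n]}) : peval mul P (fun => 0) = 0.
Proof.
pose w : 'I_0 -> X := fun => 0.
have -> : (fun => 0) = fun i => peval mul (tnth [tuple 0 | _ < n] i) w.
  by apply: funext => i; rewrite tnth_mktuple peval0.
by rewrite -peval_comp ?peval_nvar0 // => i; rewrite tnth_mktuple mcoeff0.
Qed.

End PolynomialEvaluation.

Section GeneratedSubalgebra.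
Variables (K : numFieldType) (X : topologicalLmodType K) (mul : X -> X -> X).

Lemma gen_subalg_closed S : subalg_closed mul (gen_subalg mul S).
Proof.
split=> [A _ []//|x y Sx Sy A SA hA|a x Sx A SA hA|x y Sx Sy A SA hA];
  case: (hA) => _ AD AZ AM; [apply: AD|apply: AZ|apply: AM]; by [apply: Sx|apply: Sy].
Qed.

Lemma sub_gen_subalg S : S `<=` gen_subalg mul S.
Proof. by move=> x Sx A SA _; apply: SA. Qed.

Lemma gen_subalg_min S A : S `<=` A -> subalg_closed mul A -> gen_subalg mul S `<=` A.
Proof. by move=> SA hA x; apply. Qed.

Lemma prod_list_closed (A : set X) s : subalg_closed mul A ->
  (forall a, a \in s -> A a) -> A (prod_list mul s).
Proof.
case=> A0 _ _ AM; case: s => [|a s] //= sA.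
elim: s a sA => [|b s IH] a sA /=; first by apply: sA; rewrite inE.
apply: IH => c; rewrite inE => /orP[/eqP ->|cs].
  by apply: AM; apply: sA; rewrite !inE eqxx ?orbT.
by apply: sA; rewrite !inE cs !orbT.
Qed.

Lemma peval_closed (A : set X) n (P : {mpoly K[n]}) z : subalg_closed mul A ->
  (forall i, A (z i)) -> A (peval mul P z).
Proof.
move=> hA Az; have [A0 AD AZ _] := hA.
apply: (big_ind A) => // m _; apply: AZ; apply: (prod_list_closed hA) => a.
by case/flattenP => _ /mapP[i _ ->] /nseqP[-> _].
Qed.

Hypothesis HA : comm_top_algebra mul.

Definition cat_fun n n' (z : 'I_n -> X) (z' : 'I_n' -> X) (i : 'I_(n + n')) : X :=
  match fintype.split i with inl a => z a | inr b => z' b end.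

Lemma cat_funl n n' (z : 'I_n -> X) (z' : 'I_n' -> X) i :
  cat_fun z z' (lshift n' i) = z i.
Proof. by rewrite /cat_fun (unsplitK (inl i : 'I_n + 'I_n')). Qed.

Lemma cat_funr n n' (z : 'I_n -> X) (z' : 'I_n' -> X) i :
  cat_fun z z' (rshift n i) = z' i.
Proof. by rewrite /cat_fun (unsplitK (inr i : 'I_n + 'I_n')). Qed.

Lemma cat_funS (S : set X) n n' (z : 'I_n -> X) (z' : 'I_n' -> X) :
  (forall i, S (z i)) -> (forall i, S (z' i)) -> forall i, S (cat_fun z z' i).
Proof. by move=> Sz Sz' i; rewrite /cat_fun; case: fintype.split. Qed.

Definition lshift_mpoly n n' (P : {mpoly K[n]}) : {mpoly K[n + n']} :=
  P \mPo [tuple 'X_(lshift n' i) | i < n].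
Definition rshift_mpoly n n' (P : {mpoly K[n']}) : {mpoly K[n + n']} :=
  P \mPo [tuple 'X_(rshift n i) | i < n'].

Lemma peval_lshift n n' (P : {mpoly K[n]}) z (z' : 'I_n' -> X) :
  peval mul (lshift_mpoly n' P) (cat_fun z z') = peval mul P z.
Proof. by rewrite peval_rename //; congr peval; apply: funext => i; rewrite /= cat_funl. Qed.

Lemma peval_rshift n n' (P : {mpoly K[n']}) (z : 'I_n -> X) z' :
  peval mul (rshift_mpoly n P) (cat_fun z z') = peval mul P z'.
Proof. by rewrite peval_rename //; congr peval; apply: funext => i; rewrite /= cat_funr. Qed.

Definition peval_set (S : set X) : set X :=
  [set x | exists n (P : {mpoly K[n]}) (z : 'I_n -> X),
             (forall i, S (z i)) /\ x = peval mul P z].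

Lemma peval_set_closed S : subalg_closed mul (peval_set S).
Proof.
split.
- by exists 0%N, 0, (fun => 0); split=> [[]//|]; rewrite peval0.
- move=> _ _ [n [P [z [Sz ->]]]] [n' [Q [z' [Sz' ->]]]].
  exists (n + n')%N, (lshift_mpoly n' P + rshift_mpoly n Q), (cat_fun z z').
  by split; [exact: cat_funS|rewrite pevalD // peval_lshift peval_rshift].
- move=> a _ [n [P [z [Sz ->]]]].
  by exists n, (a *: P), z; rewrite pevalZ.
- move=> _ _ [n [P [z [Sz ->]]]] [n' [Q [z' [Sz' ->]]]].
  pose P' := lshift_mpoly n' P; pose Q' := rshift_mpoly n Q.
  exists (n + n')%N, ((P' - (P'@_0%MM)%:MP) * (Q' - (Q'@_0%MM)%:MP)), (cat_fun z z').
  split; first exact: cat_funS.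
  by rewrite pevalM ?mcoeff0_subC // !peval_subC // peval_lshift peval_rshift.
Qed.

Lemma gen_subalg_sub_peval_set S : gen_subalg mul S `<=` peval_set S.
Proof.
apply: gen_subalg_min; last exact: peval_set_closed.
by move=> y Sy; exists 1%N, 'X_ord0, (fun => y); rewrite pevalXU.
Qed.

End GeneratedSubalgebra.

Lemma seq_enum (T : eqType) (s : seq T) : s != [::] ->
  exists k (w : 'I_k -> T) (pos : T -> 'I_k),
    [/\ injective w, forall t, w t \in s & {in s, cancel pos w}].
Proof.
case: s => // a s _; set us := undup (a :: s).
have us_gt0 : (0 < size us)%N.
  by rewrite -has_predT; apply/hasP; exists a; rewrite ?mem_undup ?inE ?eqxx.
exists (size us), (fun t => nth a us t), (fun x => insubd (Ordinal us_gt0) (index x us)).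
split=> [t t' /eqP|t|x xs]; first by rewrite nth_uniq ?undup_uniq // => /eqP/val_inj.
  by rewrite -mem_undup mem_nth.
by rewrite /insubd insubT /= ?index_mem ?mem_undup // => _; rewrite nth_index ?mem_undup.
Qed.

Section FreeSets.
Variables (K : numFieldType) (X : topologicalLmodType K) (mul : X -> X -> X).
Hypothesis HA : comm_top_algebra mul.

Lemma SFG_sub (S S' : set X) : S `<=` S' -> SFG mul S' -> SFG mul S.
Proof. by move=> SS' S'_free n P x P0 Pn0 x_inj Sx; apply: S'_free => // i; apply/SS'. Qed.

Lemma SFG_peval_eq0 (S : set X) k (D : {mpoly K[k]}) (w : 'I_k -> X) :
  SFG mul S -> injective w -> (forall t, S (w t)) ->
  peval mul D w = 0 -> D = (D@_0%MM)%:MP.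
Proof.
move=> S_free w_inj Sw Dw0; apply/eqP; rewrite -subr_eq0; apply/negPn/negP => nz.
by have := S_free _ _ _ (mcoeff0_subC D) nz w_inj Sw; rewrite peval_subC // Dw0 eqxx.
Qed.

(* Write [x] over a common injective family of variables; the resulting
   polynomial identity is then constant, and evaluating it with the variables
   from [G2] set to [0] yields [x = 0]. *)
Lemma SFG_gen_subalg_disjoint (S G1 G2 : set X) : SFG mul S ->
  G1 `<=` S -> G2 `<=` S -> G1 `&` G2 = set0 ->
  forall x, gen_subalg mul G1 x -> gen_subalg mul G2 x -> x = 0.
Proof.
move=> S_free G1S G2S G12 x /(gen_subalg_sub_peval_set HA) [n [P [z1 [G1z1 ->]]]].
move=> /(gen_subalg_sub_peval_set HA) [n' [P' [z2 [G2z2 Pz12]]]].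
case: n P z1 G1z1 Pz12 => [|n] P z1 G1z1 Pz12; first exact: peval_nvar0.
set s := [seq z1 i | i <- enum 'I_n.+1] ++ [seq z2 i | i <- enum 'I_n'].
have z1s i : z1 i \in s by rewrite mem_cat map_f ?mem_enum.
have z2s i : z2 i \in s by rewrite mem_cat orbC map_f ?mem_enum.
have s_neq0 : s != [::] by apply: contraTneq (z1s ord0) => ->.
have [k [w [pos [w_inj ws posK]]]] := seq_enum s_neq0.
have wS t : S (w t).
  by have := ws t; rewrite mem_cat => /orP[] /mapP[i _ ->]; [apply: G1S|apply: G2S].
pose D : {mpoly K[k]} := (P \mPo [tuple 'X_(pos (z1 i)) | i < n.+1])
  - (P' \mPo [tuple 'X_(pos (z2 i)) | i < n']).
have DE v : peval mul D v =
    peval mul P (v \o fun i => pos (z1 i)) - peval mul P' (v \o fun i => pos (z2 i)).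
  by rewrite pevalB // !peval_rename.
have wpos1 : w \o (fun i => pos (z1 i)) = z1 by apply: funext => i /=; rewrite posK.
have wpos2 : w \o (fun i => pos (z2 i)) = z2 by apply: funext => i /=; rewrite posK.
have DC : D = (D@_0%MM)%:MP.
  by apply: (SFG_peval_eq0 S_free w_inj wS); rewrite DE wpos1 wpos2 Pz12 subrr.
pose v t := if `[< G1 (w t) >] then w t else 0.
have : peval mul D v = 0 by rewrite DC pevalC.
rewrite DE.
have -> : v \o (fun i => pos (z1 i)) = z1.
  by apply: funext => i /=; rewrite /v posK // asboolT.
have -> : v \o (fun i => pos (z2 i)) = fun => 0.
  apply: funext => i /=; rewrite /v posK // asboolF // => G1z2.
  by have : (G1 `&` G2) (z2 i) by []; rewrite G12.
by rewrite (peval_at0 HA) subr0.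
Qed.

End FreeSets.

Section Perturbation.
Variables (K : numFieldType) (X : topologicalLmodType K) (mul : X -> X -> X).
Hypothesis HA : comm_top_algebra mul.
Variables (F : set X) (I : Type).
Hypothesis F_free : SFG mul F.
Unset Implicit Arguments.
Variables (nQ : I -> nat) (Q : forall p, {mpoly K[nQ p]}) (z : forall p, 'I_(nQ p) -> X).
Set Implicit Arguments.
Hypothesis z_F : forall p i, F (z p i).
Variables (f : I -> X) (eps : I -> K).
Hypotheses (f_inj : injective f) (f_F : forall p, F (f p)) (eps_neq0 : forall p, eps p != 0).

Definition apow (x : X) e := peval mul ('X_ord0 ^+ e : {mpoly K[1]}) (fun => x).

Lemma peval_XUn n (x : 'I_n -> X) i e : peval mul 'X_[U_(i) *+ e] x = apow (x i) e.
Proof.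
rewrite /apow -[fun => x i]/(x \o fun => i) -peval_rename //; congr peval.
by rewrite rmorphXn /= comp_mpolyXU -tnth_nth tnth_mktuple mpolyXn.
Qed.

Definition perturb_deg p := (msize (Q p)).+1.
Definition perturb p := peval mul (Q p) (z p) + eps p *: apow (f p) (perturb_deg p).

Lemma perturb_free n (P : {mpoly K[n]}) (p : 'I_n -> I) : injective p ->
  P@_0%MM = 0 -> P != 0 -> peval mul P (perturb \o p) != 0.
Proof.
case: n P p => [|n] P p p_inj P0 Pn0.
  by move: Pn0; rewrite (mpoly_nvar0E P) P0 eqxx.
set s := flatten [seq [seq z (p i) l | l <- enum 'I_(nQ (p i))] | i <- enum 'I_n.+1]
  ++ [seq f (p i) | i <- enum 'I_n.+1].
have fs i : f (p i) \in s by rewrite mem_cat orbC map_f ?mem_enum.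
have zs i l : z (p i) l \in s.
  rewrite mem_cat; apply/orP; left; apply/flattenP.
  exists [seq z (p i) l | l <- enum 'I_(nQ (p i))]; last by rewrite map_f ?mem_enum.
  by apply: map_f; rewrite mem_enum.
have s_neq0 : s != [::] by apply: contraTneq (fs ord0) => ->.
have [k [w [pos [w_inj ws posK]]]] := seq_enum s_neq0.
have wF t : F (w t).
  have := ws t; rewrite mem_cat.
  by case/orP => [/flattenP[_ /mapP[i _ ->] /mapP[l _ ->]]|/mapP[i _ ->]].
pose j i := pos (f (p i)).
have j_inj : injective j by move=> i i' /(congr1 w); rewrite !posK // => /f_inj /p_inj.
pose Qr i := Q (p i) \mPo [tuple 'X_(pos (z (p i) l)) | l < nQ (p i)].
pose Qc i := Qr i - ((Qr i)@_0%MM)%:MP.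
have msizeQc i : (msize (Qc i) <= perturb_deg (p i))%N.
  by apply: leq_trans (msize_subC _) _; rewrite ltnS msize_rename.
pose R := [tuple subst_poly Qc (eps \o p) j (perturb_deg \o p) i | i < n.+1].
have R0 i : (tnth R i)@_0%MM = 0.
  rewrite tnth_mktuple mcoeffD mcoeff0_subC mcoeffZ mcoeffX add0r.
  case: eqP => [/(congr1 (fun m : 'X_{1..k} => m (j i)))|_]; last by rewrite mulr0.
  by rewrite mulmnE mnm1E eqxx mnm0E mul1n.
have Rw i : peval mul (tnth R i) w = perturb (p i).
  rewrite tnth_mktuple pevalD // peval_subC // peval_rename // pevalZ // peval_XUn.
  rewrite /perturb /j posK //; congr (peval _ _ _ + _).
  by apply: funext => l /=; rewrite posK.
have [M M0 PRM] :=
  comp_subst_neq0 j_inj (fun i => eps_neq0 (p i)) (fun i => ltn0Sn _) msizeQc P0 Pn0.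
have -> : perturb \o p = fun i => peval mul (tnth R i) w by apply: funext => i; rewrite Rw.
rewrite -peval_comp // -peval_subC //.
by apply: F_free => //; [exact: mcoeff0_subC|exact: subC_neq0 M0 PRM].
Qed.

Lemma perturb_inj : injective perturb.
Proof.
move=> p1 p2 e; apply: contrapT => ne.
pose p (i : 'I_2) := if val i == 0%N then p1 else p2.
have p_inj : injective p.
  move=> i i' e'; apply: val_inj; move: e'; rewrite /p.
  by case: i i' => [[|[|//]] ?] [[|[|//]] ?] //= e'; case: ne; rewrite e'.
pose P : {mpoly K[2]} := 'X_ord0 - 'X_ord_max.
have P0 : P@_0%MM = 0 by rewrite mcoeffB !mcoeffX !mnm1_eq0 subrr.
have Pn0 : P != 0.
  apply/eqP => /(congr1 (mcoeff U_(ord0)%MM)).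
  by rewrite mcoeffB !mcoeffXU mcoeff0 eqxx /= subr0 => /eqP; rewrite oner_eq0.
have := perturb_free p_inj P0 Pn0.
rewrite pevalB // !pevalXU // -[(perturb \o p) ord0]/(perturb p1).
by rewrite -[(perturb \o p) ord_max]/(perturb p2) e subrr eqxx.
Qed.

Lemma SFG_range_perturb : SFG mul (range perturb).
Proof.
move=> n P x P0 Pn0 x_inj x_range.
have /choice[p pE] : forall i, exists q, perturb q = x i.
  by move=> i; have [q _ <-] := x_range i; exists q.
have -> : x = perturb \o p by apply: funext => i; rewrite /= pE.
by apply: perturb_free => // i i' /(congr1 perturb); rewrite !pE => /x_inj.
Qed.

End Perturbation.

Definition injon (T U : Type) (D : set T) (g : T -> U) :=
  forall x y, D x -> D y -> g x = g y -> x = y.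

Lemma card_leT_inj (T U : Type) (B : set U) : [set: T] #<= B ->
  exists f : T -> U, injective f /\ forall t, B (f t).
Proof.
move/card_leP => [g].
exists (fun t => \val (g (SigSub (mem_set (I : [set: T] t))))); split.
- move=> t t' /val_inj /(@inj _ _ _ g).
  by move=> /(_ (mem_set I) (mem_set I)) /(congr1 val).
- by move=> t; apply: set_mem; apply: valP.
Qed.

Lemma image_inverse (T U : Type) (S : set T) (g : T -> U) (h0 : U -> T) :
  exists h : U -> T, forall x, (g @` S) x -> S (h x) /\ g (h x) = x.
Proof.
have /choice[h hP] : forall x, exists t, (g @` S) x -> S t /\ g t = x.
  move=> x; have [[s Ss <-]|nSx] := pselect ((g @` S) x); first by exists s.
  by exists (h0 x) => /nSx.
by exists h.
Qed.

Section PartialFunctions.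
Variables (T V : Type) (d : T -> V).
Implicit Types (p q : set T * (T -> V)) (C : set (set T * (T -> V))).

Definition pfun_ext p q := p.1 `<=` q.1 /\ forall x, p.1 x -> p.2 x = q.2 x.

Lemma pfun_ext_refl p : pfun_ext p p.
Proof. by split. Qed.

Lemma pfun_ext_trans p q r : pfun_ext p q -> pfun_ext q r -> pfun_ext p r.
Proof.
move=> [pq hpq] [qr hqr]; split; first exact: subset_trans qr.
by move=> x px; rewrite hpq // hqr //; apply: pq.
Qed.

Definition pfun_chain C := forall p q, C p -> C q -> pfun_ext p q \/ pfun_ext q p.

Definition pfun_bigcup C : set T * (T -> V) :=
  ([set x | exists2 p, C p & p.1 x],
   fun x => if pselect (exists p, C p /\ p.1 x) is left h
            then (sval (cid h)).2 x else d x).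

Lemma pfun_bigcup_ext C p : pfun_chain C -> C p -> pfun_ext p (pfun_bigcup C).
Proof.
move=> ch Cp; split=> [x px|x px /=]; first by exists p.
case: pselect => [h|]; last by case; exists p.
case: (cid h) => q [Cq qx] /=.
by case: (ch p q Cp Cq) => [[_ e]|[_ e]]; [apply: e|rewrite e].
Qed.

Lemma pfun_bigcup_two C x y : pfun_chain C ->
  (pfun_bigcup C).1 x -> (pfun_bigcup C).1 y -> exists2 p, C p & p.1 x /\ p.1 y.
Proof.
move=> ch [p Cp px] [q Cq qy].
by case: (ch p q Cp Cq) => [[pq _]|[qp _]]; [exists q => //; split=> //; apply: pq
  |exists p => //; split=> //; apply: qp].
Qed.

Lemma pfun_bigcup_inj C : pfun_chain C -> (forall p, C p -> injon p.1 p.2) ->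
  injon (pfun_bigcup C).1 (pfun_bigcup C).2.
Proof.
move=> ch C_inj x y Ux Uy; have [p Cp [px py]] := pfun_bigcup_two ch Ux Uy.
by have [_ e] := pfun_bigcup_ext ch Cp; rewrite -!e //; apply: C_inj.
Qed.

Lemma pfun_bigcup_into C (E : set V) : pfun_chain C ->
  (forall p, C p -> forall x, p.1 x -> E (p.2 x)) ->
  forall x, (pfun_bigcup C).1 x -> E ((pfun_bigcup C).2 x).
Proof.
move=> ch C_into x [p Cp px].
by have [_ e] := pfun_bigcup_ext ch Cp; rewrite -e //; apply: C_into.
Qed.

Lemma pfun_zorn (Phi : set (set T * (T -> V))) p0 : Phi p0 ->
  (forall C, C `<=` Phi -> (forall p, C p -> pfun_ext p0 p) -> C !=set0 ->
     pfun_chain C -> Phi (pfun_bigcup C)) ->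
  exists p, [/\ Phi p, pfun_ext p0 p & forall q, Phi q -> pfun_ext p q -> pfun_ext q p].
Proof.
move=> Phi0 Phi_chain.
pose W := {p | Phi p /\ pfun_ext p0 p}.
pose R (s t : W) := `[< pfun_ext (sval s) (sval t) >].
have [| | |t tmax] := @ZL_preorder W (exist _ p0 (conj Phi0 (pfun_ext_refl p0))) R.
- by move=> s; apply/asboolP; apply: pfun_ext_refl.
- by move=> r s t /asboolP rs /asboolP st; apply/asboolP; exact: pfun_ext_trans rs st.
- move=> Aw tot; have [[s0 As0]|Aw0] := pselect (Aw !=set0); last first.
    by exists (exist _ p0 (conj Phi0 (pfun_ext_refl p0))) => s As; case: Aw0; exists s.
  pose C := [set sval s | s in Aw].
  have ch : pfun_chain C.
    move=> _ _ [s As <-] [s' As' <-].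
    by case: (tot s s' As As') => /asboolP; [left|right].
  have ext_C s : Aw s -> pfun_ext (sval s) (pfun_bigcup C).
    by move=> As; apply: pfun_bigcup_ext => //; exists s.
  have hU : Phi (pfun_bigcup C) /\ pfun_ext p0 (pfun_bigcup C).
    split; last by apply: pfun_ext_trans (ext_C _ As0); case: (svalP s0).
    apply: Phi_chain => //; last by exists (sval s0), s0.
      by move=> _ [s _ <-]; case: (svalP s).
    by move=> _ [s _ <-]; case: (svalP s).
  by exists (exist _ (pfun_bigcup C) hU) => s As; apply/asboolP; apply: ext_C.
exists (sval t); split; [by case: (svalP t)|by case: (svalP t)|].
move=> q Phiq tq.
have hq : Phi q /\ pfun_ext p0 q.
  by split=> //; apply: pfun_ext_trans tq; case: (svalP t).
by have /(_ (asboolT tq)) /asboolP := tmax (exist _ q hq).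
Qed.

End PartialFunctions.

Lemma compare_sets (T : Type) (D E : set T) :
  (exists g : T -> T, injon D g /\ forall x, D x -> E (g x)) \/
  (exists g : T -> T, injon E g /\ forall x, E x -> D (g x)).
Proof.
pose Phi (p : set T * (T -> T)) :=
  [/\ p.1 `<=` D, injon p.1 p.2 & forall x, p.1 x -> E (p.2 x)].
have [|C CPhi _ _ ch|[S g] [[/= SD g_inj gE] _ g_max]] :=
  @pfun_zorn T T id Phi (set0, id).
- by split=> // x [].
- split; first by move=> x [p Cp px]; have [+ _ _] := CPhi p Cp; apply.
    by apply: pfun_bigcup_inj => // p /CPhi[].
  by apply: pfun_bigcup_into => // p /CPhi[].
have [DS|/existsNP[d0 /not_implyP[Dd0 Sd0]]] := pselect (D `<=` S).
  by left; exists g; split=> [x y /DS Sx /DS Sy|x /DS]; [apply: g_inj|apply: gE].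
have [ES|/existsNP[e0 /not_implyP[Ee0 Se0]]] := pselect (E `<=` g @` S).
  right; have [h hP] := image_inverse S g id.
  exists h; split=> [x y Ex Ey hxy|x /ES/hP[/SD]//].
  by rewrite -(hP x (ES x Ex)).2 -(hP y (ES y Ey)).2 hxy.
pose q := (S `|` [set d0], fun x => if pselect (x = d0) is left _ then e0 else g x).
have qS x : q.1 x -> x <> d0 -> S x by move=> [//|-> /(_ erefl)].
suff [Sq _] : pfun_ext q (S, g) by case: Sd0; apply: Sq; right.
apply: g_max; last first.
  by split=> [x Sx|x Sx /=]; [left|case: pselect => // xd; rewrite xd in Sx].
split=> [x [/SD|->]//|x y qx qy /=|x qx /=].
  case: pselect => [->|/(qS _ qx) Sx]; case: pselect => [->|/(qS _ qy) Sy] // e.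
  - by case: Se0; exists y.
  - by case: Se0; exists x.
  - exact: g_inj.
by case: pselect => [//|/(qS _ qx)/gE].
Qed.

Section Squares.
Variable T : Type.
Implicit Types (D E : set T) (S : set (T * T)).

Definition sq D : set (T * T) := [set u | D u.1 /\ D u.2].
Definition side S : set T := [set a | S (a, a)].

Lemma side_sq D : side (sq D) = D.
Proof. by apply/seteqP; split=> a /=; [case|split]. Qed.

Definition sq_pfun (p : set (T * T) * (T * T -> T)) :=
  [/\ p.1 = sq (side p.1), injon p.1 p.2 & forall u, p.1 u -> side p.1 (p.2 u)].

Lemma sq_pfun_bigcup d C : C `<=` sq_pfun -> pfun_chain C -> sq_pfun (pfun_bigcup d C).
Proof.
move=> C_sq ch; set U := pfun_bigcup d C.
have U_side p : C p -> side p.1 `<=` side U.1 by move=> Cp a pa; exists p.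
split.
- apply/seteqP; split=> [u|[a b] [/= Ua Ub]].
    case=> p Cp; have [pE _ _] := C_sq p Cp; rewrite pE => -[pa pb].
    by split; [apply: (U_side p Cp) pa|apply: (U_side p Cp) pb].
  have [p Cp [pa pb]] := pfun_bigcup_two (d := d) ch Ua Ub.
  by have [pE _ _] := C_sq p Cp; exists p => //; rewrite pE.
- by apply: pfun_bigcup_inj => // p /C_sq[].
- apply: pfun_bigcup_into => // p Cp u pu; apply: (U_side p Cp).
  by have [_ _] := C_sq p Cp; apply.
Qed.

Lemma sq_pfun_nat (e : nat -> T) : injective e -> exists f, sq_pfun (sq (range e), f).
Proof.
move=> e_inj; have [einv einvP] := image_inverse setT e (fun => 0%N).
have eK a : range e a -> e (einv a) = a by move=> ea; have [_] := einvP a ea.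
exists (fun u => e (pickle (einv u.1, einv u.2))); split; first by rewrite side_sq.
- move=> [a b] [a' b'] [/= ea eb] [/= ea' eb'] /e_inj /(pcan_inj (@pickleK _)) [h1 h2].
  by rewrite -(eK _ ea) -(eK _ eb) h1 h2 !eK.
- by move=> u _; rewrite side_sq; exists (pickle (einv u.1, einv u.2)).
Qed.

Lemma injon_union D E (f : T * T -> T) (h : T -> T) (a0 a1 : T) :
  D a0 -> D a1 -> a0 <> a1 -> injon (sq D) f -> (forall u, sq D u -> D (f u)) ->
  injon E h -> (forall x, E x -> D (h x)) ->
  exists k : T -> T, injon (D `|` E) k /\ forall x, (D `|` E) x -> D (k x).
Proof.
move=> Da0 Da1 a01 f_inj fD h_inj hD.
have EnD x : (D `|` E) x -> ~ D x -> E x by case.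
exists (fun x => if pselect (D x) is left _ then f (x, a0) else f (h x, a1)).
split=> [x y Ux Uy|x Ux]; last first.
  by case: pselect => Dx; apply: fD; split=> //=; apply/hD/EnD.
case: pselect => Dx; case: pselect => Dy /f_inj.
- by move=> /(_ (conj Dx Da0) (conj Dy Da0)) [].
- by move=> /(_ (conj Dx Da0) (conj (hD _ (EnD _ Uy Dy)) Da1)) [_ /a01].
- by move=> /(_ (conj (hD _ (EnD _ Ux Dx)) Da1) (conj Dy Da0)) [_ /esym/a01].
move=> /(_ (conj (hD _ (EnD _ Ux Dx)) Da1) (conj (hD _ (EnD _ Uy Dy)) Da1)) [].
by apply: h_inj; apply: EnD.
Qed.

Lemma sq_map_inj D D' (k : T -> T) (f : T * T -> T) :
  injon D k -> (forall x, D x -> D' (k x)) ->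
  injon (sq D') f -> (forall u, sq D' u -> D' (f u)) ->
  injon (sq D) (fun u => f (k u.1, k u.2)) /\
  forall u, sq D u -> D' (f (k u.1, k u.2)).
Proof.
move=> k_inj kD f_inj fD.
have kk u : sq D u -> sq D' (k u.1, k u.2) by case=> *; split; apply: kD.
split=> [[a b] [a' b'] uD u'D /(f_inj _ _ (kk _ uD) (kk _ u'D)) [e1 e2]|u uD].
  case: uD u'D => [/= Da Db] [/= Da' Db'].
  by rewrite (k_inj _ _ Da Da' e1) (k_inj _ _ Db Db' e2).
exact/fD/kk.
Qed.

(* With [D' = D + g(D)], [D' x D'] injects into [D] (as [D'] injects into
   [D x 2], hence into [D]); the new pairs are sent into the copy [g(D)]. *)
Lemma sq_pfun_extend D f (g : T -> T) (a0 a1 : T) : D a0 -> D a1 -> a0 <> a1 ->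
  sq_pfun (sq D, f) -> injon D g -> (forall x, D x -> ~ D (g x)) ->
  exists f', sq_pfun (sq (D `|` g @` D), f') /\
             pfun_ext (sq D, f) (sq (D `|` g @` D), f').
Proof.
move=> Da0 Da1 a01 [_ /= f_inj]; rewrite side_sq => fD g_inj gD.
have [h hP] := image_inverse D g id.
have h_inj : injon (g @` D) h.
  by move=> x y gx gy hxy; rewrite -(hP x gx).2 -(hP y gy).2 hxy.
have [k [k_inj kD]] := injon_union Da0 Da1 a01 f_inj fD h_inj (fun x gx => (hP x gx).1).
have [th_inj thD] := sq_map_inj k_inj kD f_inj fD.
pose f' u := if pselect (sq D u) is left _ then f u else g (f (k u.1, k u.2)).
exists f'; split; last first.
  by split=> [u [Du1 Du2]|u uD /=]; [split; left|rewrite /f'; case: pselect].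
split=> //=; first by rewrite side_sq.
- move=> u v uD' vD'; rewrite /f'; case: pselect => uD; case: pselect => vD.
  + exact: f_inj.
  + by move=> e; case: (gD _ (thD v vD')); rewrite -e; apply: fD.
  + by move=> e; case: (gD _ (thD u uD')); rewrite e; apply: fD.
  + by move/(g_inj _ _ (thD u uD') (thD v vD')); apply: th_inj.
- move=> u uD'; rewrite side_sq /f'; case: pselect => uD; first by left; apply: fD.
  by right; exists (f (k u.1, k u.2)) => //; apply: thD.
Qed.

End Squares.

(* A maximal injection of a square [D x D] into [D] (found by Zorn's lemma,
   starting from a countable [D]) must have [|D| >= |A \ D|], hence
   [A = D + (A \ D)] injects into [D] and [A x A] into [D x D]. *)
Lemma card_sq (A : Type) : infinite_set [set: A] -> exists phi : A * A -> A, injective phi.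
Proof.
move=> /infiniteP/card_leT_inj[e [e_inj _]].
have [f0 f0P] := sq_pfun_nat e_inj.
have [C C_sq _ _ ch|[S f] [Sf [S0 _] f_max]] := pfun_zorn (d := fst) f0P.
  exact: sq_pfun_bigcup.
have [/= SE _ _] := Sf; set D := side S in SE; rewrite SE in Sf f_max.
have De n : D (e n) by apply: S0; split; exists n.
have e01 : e 0%N <> e 1%N by move/e_inj.
have [_ /= f_inj] := Sf; rewrite side_sq => fD.
case: (compare_sets D (~` D)) => [[g [g_inj gD]]|[h [h_inj hD]]].
  have [f' [f'P f'ext]] := sq_pfun_extend (De 0%N) (De 1%N) e01 Sf g_inj gD.
  have [sub _] := f_max _ f'P f'ext.
  have [Dg _] : sq D (g (e 0%N), g (e 0%N)) by apply: sub; split; right; exists (e 0%N).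
  by case: (gD _ (De 0%N) Dg).
have [k [k_inj kD]] := injon_union (De 0%N) (De 1%N) e01 f_inj fD h_inj hD.
have [phi_inj _] := sq_map_inj k_inj kD f_inj fD.
by exists (fun u => f (k u.1, k u.2)) => u v; apply: phi_inj; split; rewrite setUv.
Qed.

Section Topology.
Variables (K : numFieldType) (X : topologicalLmodType K).

Lemma open_add_scale_neq0 (O : set X) (y h : X) :
  open O -> O y -> exists2 e : K, e != 0 & O (y + e *: h).
Proof.
move=> O_open Oy.
have cvg_scale : (fun t : K^o => t *: h) @ nbhs (0 : K^o) --> 0 *: h.
  exact: (@continuous2_cvg K^o K^o X X (nbhs (0 : K^o)) _ (fun t => t) (fun => h)
    (fun a b => a *: b)
    0 h (@scale_continuous K X (0, h)) cvg_id (cvg_cst _)).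
have cvg_e : (fun t : K^o => y + t *: h) @ nbhs (0 : K^o) --> y + 0 *: h.
  exact: (@continuous2_cvg K^o X X X (nbhs (0 : K^o)) _ (fun => y) (fun t => t *: h)
    (fun a b => a + b)
    y (0 *: h) (@add_continuous X (y, 0 *: h)) (cvg_cst _) cvg_scale).
rewrite scale0r addr0 in cvg_e.
have /cvg_e /nbhs_ballP [e /= e0 he] : nbhs y O by apply: open_nbhs_nbhs.
exists (e / 2); first by rewrite mulf_neq0 ?gt_eqF // invr_eq0 pnatr_eq0.
apply: (he (e / 2)).
rewrite /ball /= sub0r normrN gtr0_norm ?divr_gt0 //.
by rewrite ltr_pdivrMr // ltr_pMr // ltr1n.
Qed.

Lemma weight_le_pibase (A : Type) : weight_le X A ->
  exists O : A -> set X, (forall b, open (O b) /\ O b !=set0) /\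
    forall V, open V -> V !=set0 -> exists b, O b `<=` V.
Proof.
move=> [B [B_open B_base] /pcard_surjP [g g_surj]].
pose O b := if `[< open (g b) /\ g b !=set0 >] then g b else setT.
exists O; split=> [b|V V_open [x Vx]].
  by rewrite /O; case: asboolP => // _; split; [exact: openT|exists 0].
have [U [BU Ux] UV] : filter_from [set U | B U /\ U x] id V.
  by apply: B_base; exact: open_nbhs_nbhs.
have [b _ gb] := g_surj U BU.
exists b; rewrite /O; case: asboolP => [_|]; first by rewrite gb.
by case; rewrite gb; split; [exact: B_open|exists x].
Qed.

End Topology.

Section DenseFreeFamilies.
Variables (K : numFieldType) (X : topologicalLmodType K) (mul : X -> X -> X).
Hypothesis HA : comm_top_algebra mul.

Lemma free_perturbation (I : Type) (F : set X) (f y : I -> X) (U : I -> set X) :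
  SFG mul F -> injective f -> (forall p, F (f p)) ->
  (forall p, gen_subalg mul F (y p)) -> (forall p, open (U p)) -> (forall p, U p (y p)) ->
  exists g : I -> X, [/\ injective g, SFG mul (range g),
    forall p, gen_subalg mul F (g p) & forall p, U p (g p)].
Proof.
move=> F_free f_inj f_F y_gen U_open U_y.
have /choice[rep rep_y] :
    forall p, exists r : {n : nat & ({mpoly K[n]} * ('I_n -> X))%type},
    (forall i, F ((projT2 r).2 i)) /\ y p = peval mul (projT2 r).1 (projT2 r).2.
  move=> p; have [n [P [z [Fz ->]]]] := gen_subalg_sub_peval_set HA (y_gen p).
  by exists (existT _ n (P, z)).
pose nQ p := projT1 (rep p).
pose Q p : {mpoly K[nQ p]} := (projT2 (rep p)).1.
pose z p : 'I_(nQ p) -> X := (projT2 (rep p)).2.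
have z_F p i : F (z p i) by have [Fz _] := rep_y p; apply: Fz.
have /choice[eps eps_ok] : forall p, exists e : K,
    e != 0 /\ U p (y p + e *: apow mul (f p) (perturb_deg Q p)).
  move=> p; have [e e0 Ue] := open_add_scale_neq0 (apow mul (f p) (perturb_deg Q p))
    (U_open p) (U_y p).
  by exists e.
have eps_neq0 p : eps p != 0 by case: (eps_ok p).
exists (perturb mul Q z f eps); split.
- by move=> p1 p2; apply: (perturb_inj HA F_free z_F f_inj f_F eps_neq0).
- by move=> n P x; apply: (SFG_range_perturb HA F_free z_F f_inj f_F eps_neq0).
- move=> p; have gen_F := gen_subalg_closed mul F; have [_ FD FZ _] := gen_F.
  apply: FD; [|apply: FZ]; apply: (peval_closed _ gen_F) => i; apply: sub_gen_subalg.
    exact: z_F.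
  exact: f_F.
- by move=> p; rewrite /perturb -(rep_y p).2; case: (eps_ok p).
Qed.

Lemma inf_sda_of_free_family (A : Type) (M : set X) (g : A * A -> X) :
  injective g -> SFG mul (range g) -> gen_subalg mul (range g) `<=` M `|` [set 0] ->
  (forall k V, open V -> V !=set0 -> exists b, V (g (k, b))) ->
  inf_strongly_dense_algebrable mul A M.
Proof.
move=> g_inj g_free gM g_dense.
pose G k := [set g (k, b) | b in [set: A]].
have Gg k : G k `<=` range g by move=> _ [b _ <-]; exists (k, b).
exists (fun k => gen_subalg mul (G k)); split.
- move=> k; exists (G k); split=> //; first exact: SFG_sub (Gg k) g_free.
  by apply: inj_card_eq => b b' _ _ /g_inj[].
- move=> k V V0 V_open; have [b Vb] := g_dense k V V_open V0.
  by exists (g (k, b)); split=> //; apply: sub_gen_subalg; exists b.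
- move=> k; apply: subset_trans gM; apply: gen_subalg_min; last exact: gen_subalg_closed.
  by move=> x /Gg /sub_gen_subalg.
- move=> k1 k2 k12; apply/seteqP; split=> [x [x1 x2]|_ ->]; last first.
    have [G1 _ _ _] := gen_subalg_closed mul (G k1).
    by have [] := gen_subalg_closed mul (G k2).
  apply: (SFG_gen_subalg_disjoint HA g_free (Gg k1) (Gg k2) _ x1 x2).
  by rewrite -subset0 => _ [[b _ <-] [b' _ /g_inj[/esym/k12]]].
Qed.

End DenseFreeFamilies.

Theorem inf_strongly_dense_algebrableP (K : numFieldType) (X : topologicalLmodType K)
    (mul : X -> X -> X) (M : set X) (A : Type) :
  comm_top_algebra mul -> infinite_set [set: A] -> weight_le X A ->
  inf_strongly_dense_algebrable mul A M <-> strongly_dense_algebrable mul A M.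
Proof.
move=> HA A_inf A_weight; split=> [[Y [Y_free Y_dense YM _]]|].
  by have [a _] := infinite_setN0 A_inf; exists (Y a).
move=> [_ [[F [F_free F_card ->]] F_dense FM]].
have [e [e_inj e_F]] : exists e : A -> X, injective e /\ forall a, F (e a).
  by apply: card_leT_inj; move/card_esym: F_card; rewrite card_eq_le => /andP[].
have [phi phi_inj] := card_sq A_inf.
have [Bs [Bs_open Bs_base]] := weight_le_pibase A_weight.
have /choice[y y_ok] : forall b, exists y, gen_subalg mul F y /\ Bs b y.
  move=> b; have [Bb_open Bb0] := Bs_open b.
  by have [y [Oy Fy]] := F_dense _ Bb0 Bb_open; exists y.
have [g [g_inj g_free g_F g_B]] := free_perturbation HA (U := Bs \o snd) F_free
  (inj_comp e_inj phi_inj) (fun p => e_F (phi p)) (fun p => (y_ok p.2).1)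
  (fun p => (Bs_open p.2).1) (fun p => (y_ok p.2).2).
apply: (inf_sda_of_free_family HA g_inj g_free).
  apply: subset_trans FM; apply: gen_subalg_min (gen_subalg_closed _ _).
  by move=> _ [p _ <-]; apply: g_F.
move=> k V V_open V0; have [b Bb] := Bs_base V V_open V0.
by exists b; apply/Bb/(g_B (k, b)).
Qed.

Theorem theorem4p6 (R : realType) (b : bool)
    (X : topologicalLmodType (Kfield R b)) (mul : X -> X -> X)
    (M : set X) (A : Type) :
  comm_top_algebra mul ->
  infinite_set [set: A] ->
  weight_le X A ->
  (inf_strongly_dense_algebrable mul A M <-> strongly_dense_algebrable mul A M).
Proof. exact: inf_strongly_dense_algebrableP. Qed.
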